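(* For every $i,j\in[K]$, $$\boldsymbol\tau^\star_{\mathrm{lin}}(\mathcal{Z}:\mathcal{X}-x_i)\le 4\,\boldsymbol\tau^\star_{\mathrm{lin}}(\mathcal{Z}:\mathcal{X}-x_j).$$
   Context: $\mathcal{X}=\{x_1,\dots,x_K\}\subset\mathbb{R}^d$, $\mathcal{Z}\subset\mathbb{R}^d$ finite, $\theta^\star\in\mathbb{R}^d$, and $z^\star$ the unique maximizer of $z^\top\theta^\star$ over $z\in\mathcal{Z}$. $\Delta^{(K)}$ is the probability simplex on $[K]$. Generalized inverse norm: for a positive semidefinite matrix $\mathbf A$ and $x\in\mathbb{R}^d$, $\|x\|_{\mathbf A^{-1}}:=\lim_{\lambda\to0^+}\sqrt{x^\top(\mathbf A+\lambda\mathbf I_d)^{-1}x}$ (equal to $+\infty$ if $x$ is not in the column space of $\mathbf A$). For $j\in[K]$ and $\mathbf p\in\Delta^{(K)}$, $\mathbf\Sigma_{-j,\mathbf p}:=\sum_{i=1}^Kp_i(x_i-x_j)(x_i-x_j)^\top$, and $$\boldsymbol\tau^\star_{\mathrm{lin}}(\mathcal{Z}:\mathcal{X}-x_j):=\min_{\mathbf p\in\Delta^{(K)}}\max_{z\in\mathcal{Z}\setminus\{z^\star\}}\frac{\|z^\star-z\|^2_{\mathbf\Sigma_{-j,\mathbf p}^{-1}}}{((z^\star-z)^\top\theta^\star)^2}$$ (with values in $[0,+\infty]$). *)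

From HB Require Import structures.
From mathcomp Require Import all_boot all_order all_algebra.
From mathcomp Require Import all_classical all_reals all_analysis.
Set Implicit Arguments. Unset Strict Implicit. Unset Printing Implicit Defensive.
Import Order.TTheory GRing.Theory Num.Theory.
Local Open Scope classical_set_scope.
Local Open Scope ring_scope.

Section Defs.
Variables (R : realType) (d : nat).

Definition qform (M : 'M[R]_d) (x : 'cV[R]_d) : R :=
  ((x^T *m M *m x) 0 0).

(* generalized inverse norm  ||x||_{A^{-1}} := lim_{l -> 0+} sqrt(x^T (A + l I)^{-1} x),
   valued in the extended reals (+oo when x is outside the column space of A) *)
Definition ginv_norm (A : 'M[R]_d) (x : 'cV[R]_d) : \bar R :=
  lim ((fun l : R => (Num.sqrt (qform (invmx (A + l%:M)) x))%:E) @ 0^'+).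

Definition Sigma_mj (K : nat) (X : 'I_K -> 'cV[R]_d) (j : 'I_K) (p : 'I_K -> R)
  : 'M[R]_d :=
  \sum_(i < K) p i *: ((X i - X j) *m (X i - X j)^T).

Definition simplex (K : nat) : set ('I_K -> R) :=
  [set p | (forall i, 0 <= p i) /\ \sum_(i < K) p i = 1].

Definition tau_obj (K : nat) (X : 'I_K -> 'cV[R]_d) (Z : seq 'cV[R]_d)
  (zs theta : 'cV[R]_d) (j : 'I_K) (p : 'I_K -> R) : \bar R :=
  \big[maxe/0%E]_(z <- undup Z | z != zs)
    (let n := ginv_norm (Sigma_mj X j p) (zs - z) in
     (n * n) * ((((zs - z)^T *m theta) 0 0) ^+ 2)^-1%:E)%E.

Definition tau_lin (K : nat) (X : 'I_K -> 'cV[R]_d) (Z : seq 'cV[R]_d)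
  (zs theta : 'cV[R]_d) (j : 'I_K) : \bar R :=
  ereal_inf [set tau_obj X Z zs theta j p | p in @simplex K].

End Defs.

From HB Require Import structures.
From mathcomp Require Import all_boot all_order all_algebra.
From mathcomp Require Import all_classical all_reals all_analysis.
From mathcomp Require Import ring lra.
Import Order.TTheory GRing.Theory Num.Theory.
Set Implicit Arguments. Unset Strict Implicit. Unset Printing Implicit Defensive.
Local Open Scope ring_scope.

(* Moving the base point from x_j to x_i costs at most a factor 4 in the
   Loewner order: for q := (p + delta_j) / 2 one has
   Sigma_{-j,p} <= 4 Sigma_{-i,q}, because with b := <x_i - x_j, v> every
   u := <x_k - x_j, v> satisfies u^2 <= 2 (u - b)^2 + 2 b^2, and the
   delta_j half of q pays for the 2 b^2.  Regularised inversion reverses the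
   Loewner order, so every generalised inverse norm for (i, q) is at most twice
   the one for (j, p); squaring, maximising over z and minimising over p gives
   the factor 4. *)

Section Dot.
Variables (R : realFieldType) (d : nat).
Implicit Types (M : 'M[R]_d) (u v w : 'cV[R]_d).

Definition vdot u v : R := (u^T *m v) 0 0.

Lemma vdotC u v : vdot u v = vdot v u.
Proof.
rewrite /vdot -[v^T *m u]trmxK trmx_mul trmxK [in RHS]mxE.
by congr (_ _ _); apply: val_inj.
Qed.

Lemma vdotDr u v w : vdot u (v + w) = vdot u v + vdot u w.
Proof. by rewrite /vdot mulmxDr mxE. Qed.

Lemma vdotZr (a : R) u v : vdot u (a *: v) = a * vdot u v.
Proof. by rewrite /vdot -scalemxAr mxE. Qed.

Lemma vdotNr u v : vdot u (- v) = - vdot u v.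
Proof. by rewrite /vdot mulmxN mxE. Qed.

Lemma vdotDl u v w : vdot (v + w) u = vdot v u + vdot w u.
Proof. by rewrite vdotC vdotDr !(vdotC u). Qed.

Lemma vdotZl (a : R) u v : vdot (a *: v) u = a * vdot v u.
Proof. by rewrite vdotC vdotZr vdotC. Qed.

Lemma vdotNl u v : vdot (- v) u = - vdot v u.
Proof. by rewrite vdotC vdotNr vdotC. Qed.

Lemma vdot0l v : vdot 0 v = 0.
Proof. by rewrite /vdot trmx0 mul0mx mxE. Qed.

Lemma vdot_sym_mulmx M u v : M^T = M -> vdot u (M *m v) = vdot (M *m u) v.
Proof. by move=> sM; rewrite /vdot mulmxA -{1}sM -trmx_mul. Qed.

Lemma vdot_ge0 v : 0 <= vdot v v.
Proof.
by rewrite /vdot mxE; apply: sumr_ge0 => k _; rewrite mxE -expr2 sqr_ge0.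
Qed.

Lemma vdot_gt0 v : v != 0 -> 0 < vdot v v.
Proof.
move=> nz_v; rewrite lt_def vdot_ge0 andbT; apply: contra nz_v.
rewrite /vdot mxE psumr_eq0 => [/allP v0|k _]; last first.
  by rewrite mxE -expr2 sqr_ge0.
apply/eqP/matrixP => k l; rewrite ord1 !mxE.
by have := v0 k (mem_index_enum k); rewrite mxE -expr2 sqrf_eq0 => /eqP.
Qed.

End Dot.

Section QuadraticForm.
Variables (R : realType) (d : nat).
Implicit Types (M N : 'M[R]_d) (v x : 'cV[R]_d).

Definition psdmx M := forall v, 0 <= qform M v.

Lemma qformE M x : qform M x = vdot x (M *m x).
Proof. by rewrite /qform /vdot mulmxA. Qed.

Lemma qform0 M : qform M 0 = 0.
Proof. by rewrite qformE mulmx0 vdot0l. Qed.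

Lemma qformZ M (a : R) x : qform M (a *: x) = a ^+ 2 * qform M x.
Proof. by rewrite !qformE -scalemxAr vdotZr vdotZl mulrA expr2. Qed.

Lemma qform_add_scalar M (l : R) x : qform (M + l%:M) x = qform M x + l * vdot x x.
Proof. by rewrite !qformE mulmxDl vdotDr mul_scalar_mx vdotZr. Qed.

Lemma unitmx_qform_gt0 M : (forall v, v != 0 -> 0 < qform M v) -> M \in unitmx.
Proof.
move=> pos; rewrite -row_free_unit -kermx_eq0; apply/eqP/row_matrixP => k.
rewrite row0; apply/eqP/negPn/negP => nz.
have := pos (row k (kermx M))^T; rewrite trmx_eq0 => /(_ nz).
rewrite /qform trmxK.
have /sub_kermxP -> : (row k (kermx M) <= kermx M)%MS by exact: row_sub.
by rewrite mul0mx mxE ltxx.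
Qed.

(* Completing the square: x^T M^-1 x is the maximum over v of 2 <v, x> - v^T M v,
   attained at v = M^-1 x. *)
Lemma qform_invmx_sq M x v : M^T = M -> M \in unitmx ->
  qform (invmx M) x = qform M (v - invmx M *m x) - qform M v + 2 * vdot v x.
Proof.
move=> sM uM; set w := invmx M *m x.
have Mw : M *m w = x by rewrite /w mulmxA mulmxV // mul1mx.
rewrite !qformE mulmxBr Mw vdotDr vdotNr !vdotDl !vdotNl.
rewrite (vdot_sym_mulmx w v sM) Mw -/w (vdotC x w) (vdotC x v); lra.
Qed.

Lemma qform_invmx_le M N x (c : R) : M^T = M -> N^T = N ->
  M \in unitmx -> N \in unitmx -> psdmx M -> 0 < c ->
  (forall v, c * qform M v <= qform N v) ->
  qform (invmx N) x <= c^-1 * qform (invmx M) x.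
Proof.
move=> sM sN uM uN psdM c_gt0 cMN; set v := invmx N *m x.
have eN := qform_invmx_sq x v sN uN; rewrite subrr qform0 add0r in eN.
have eM := qform_invmx_sq x (c *: v) sM uM; rewrite qformZ vdotZl in eM.
have lbM : - (c ^+ 2 * qform M v) + 2 * (c * vdot v x) <= qform (invmx M) x.
  by have := psdM (c *: v - invmx M *m x); lra.
rewrite eN; apply: le_trans (ler_wpM2l _ lbM); last by rewrite invr_ge0 ltW.
have c_neq0 : c != 0 by rewrite gt_eqF.
have -> : c^-1 * (- (c ^+ 2 * qform M v) + 2 * (c * vdot v x)) =
    - (c * qform M v) + 2 * vdot v x by field.
by have := cMN v; lra.
Qed.

Section Regularised.
Variables (M : 'M[R]_d) (l : R).
Hypotheses (sM : M^T = M) (psdM : psdmx M).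

Lemma sym_add_scalar : (M + l%:M)^T = M + l%:M.
Proof. by rewrite linearD /= sM tr_scalar_mx. Qed.

Lemma psd_add_scalar : 0 <= l -> psdmx (M + l%:M).
Proof.
by move=> l_ge0 v; rewrite qform_add_scalar addr_ge0 ?mulr_ge0 ?vdot_ge0.
Qed.

Lemma unitmx_add_scalar : 0 < l -> M + l%:M \in unitmx.
Proof.
move=> l_gt0; apply: unitmx_qform_gt0 => v nz_v; rewrite qform_add_scalar.
by rewrite ltr_wpDl ?mulr_gt0 ?vdot_gt0.
Qed.

End Regularised.
End QuadraticForm.

Section GeneralisedInverseNorm.
Import numFieldNormedType.Exports.
Local Open Scope classical_set_scope.
Variables (R : realType) (d : nat).
Implicit Types (A B : 'M[R]_d) (x : 'cV[R]_d).

Definition reg_norm A x (l : R) : \bar R :=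
  (Num.sqrt (qform (invmx (A + l%:M)) x))%:E.

Let Ipos := [set` Interval (BRight (0 : R)) (BInfty R false)].

Lemma in_Ipos (l : R) : Ipos l = (0 < l).
Proof. by rewrite /Ipos /= in_itv /= andbT. Qed.

Lemma ginv_normE A x : A^T = A -> psdmx A ->
  ginv_norm A x = ereal_sup (reg_norm A x @` Ipos).
Proof.
move=> sA psdA; apply: cvg_lim; first exact: ereal_hausdorff.
apply: nonincreasing_at_right_cvge => // l l'.
rewrite !in_itv /= !andbT => l_gt0 l'_gt0 ll'.
rewrite lee_fin; apply: ler_wsqrtr; rewrite -[X in _ <= X]mul1r -{1}invr1.
apply: qform_invmx_le => //; rewrite ?sym_add_scalar ?unitmx_add_scalar //.
- by apply: psd_add_scalar => //; exact: ltW.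
- move=> v; rewrite mul1r !qform_add_scalar lerD2l.
  by apply: ler_wpM2r ll'; exact: vdot_ge0.
Qed.

Lemma ginv_norm_ge0 A x : A^T = A -> psdmx A -> (0 <= ginv_norm A x)%E.
Proof.
move=> sA psdA; rewrite ginv_normE //.
apply: le_trans (ereal_sup_ubound _); last by exists 1; rewrite ?in_Ipos.
by rewrite lee_fin sqrtr_ge0.
Qed.

Lemma ginv_norm_le_scale A B x (a : R) : A^T = A -> B^T = B ->
  psdmx A -> psdmx B -> 0 < a -> (forall v, qform A v <= a ^+ 2 * qform B v) ->
  (ginv_norm B x <= a%:E * ginv_norm A x)%E.
Proof.
move=> sA sB psdA psdB a_gt0 leAB; rewrite !ginv_normE //.
apply: ge_ereal_sup => _ [l + <-]; rewrite in_Ipos => l_gt0.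
have a2l_gt0 : 0 < a ^+ 2 * l by rewrite mulr_gt0 ?exprn_gt0.
apply: (@le_trans _ _ (a%:E * reg_norm A x (a ^+ 2 * l))%E); last first.
  apply: lee_wpmul2l; first by rewrite lee_fin ltW.
  by apply: ereal_sup_ubound; exists (a ^+ 2 * l); rewrite ?in_Ipos.
have le_inv : qform (invmx (B + l%:M)) x <=
    (a ^- 2)^-1 * qform (invmx (A + (a ^+ 2 * l)%:M)) x.
  apply: qform_invmx_le; rewrite ?sym_add_scalar ?unitmx_add_scalar ?invr_gt0 ?exprn_gt0 //.
  - by apply: psd_add_scalar => //; exact: ltW.
  - have a2_neq0 : a ^+ 2 != 0 by rewrite expf_neq0 ?gt_eqF.
    move=> v; rewrite !qform_add_scalar mulrDr -(mulrA (a ^+ 2)) mulKf // lerD2r.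
    by rewrite ler_pdivrMl ?exprn_gt0.
rewrite invrK in le_inv; rewrite /reg_norm -EFinM lee_fin.
apply: le_trans (ler_wsqrtr le_inv) _.
by rewrite sqrtrM ?sqr_ge0 // sqrtr_sqr gtr0_norm.
Qed.

End GeneralisedInverseNorm.

Section DesignMatrix.
Variables (R : realType) (d K : nat) (X : 'I_K -> 'cV[R]_d).

Lemma qform_Sigma_mj j p v :
  qform (Sigma_mj X j p) v = \sum_k p k * vdot (X k - X j) v ^+ 2.
Proof.
rewrite /qform /Sigma_mj mulmx_sumr mulmx_suml summxE; apply: eq_bigr => k _.
rewrite -scalemxAr -scalemxAl mxE; congr (_ * _).
rewrite mulmxA -[(v^T *m _ *m _) *m v]mulmxA mxE big_ord1 expr2.
by rewrite -/(vdot v _) -/(vdot _ v) vdotC.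
Qed.

Lemma Sigma_mj_sym j p : (Sigma_mj X j p)^T = Sigma_mj X j p.
Proof.
rewrite /Sigma_mj linear_sum; apply: eq_bigr => k _.
by rewrite linearZ /= trmx_mul trmxK.
Qed.

Lemma Sigma_mj_psd j p : (forall k, 0 <= p k) -> psdmx (Sigma_mj X j p).
Proof.
by move=> p_ge0 v; rewrite qform_Sigma_mj sumr_ge0 // => k _; rewrite mulr_ge0 ?sqr_ge0.
Qed.

Definition mix_dirac (j : 'I_K) (p : 'I_K -> R) : 'I_K -> R :=
  fun k => (p k + (k == j)%:R) / 2.

Lemma mix_dirac_simplex j p : simplex p -> simplex (mix_dirac j p).
Proof.
move=> [p_ge0 p_sum1]; split=> [k|]; first by rewrite divr_ge0 ?addr_ge0.
rewrite -mulr_suml big_split /= p_sum1 (bigD1 j) //= eqxx big1 ?addr0.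
  by rewrite -[1 + 1]/2%:R divff.
by move=> k /negPf ->.
Qed.

Lemma Sigma_mj_rebase i j p v : simplex p ->
  qform (Sigma_mj X j p) v <= 2 ^+ 2 * qform (Sigma_mj X i (mix_dirac j p)) v.
Proof.
move=> [p_ge0 p_sum1]; rewrite !qform_Sigma_mj.
set u := fun k => vdot (X k - X j) v; set b := vdot (X i - X j) v.
have shift k : vdot (X k - X i) v = u k - b.
  by rewrite /u /b -vdotNl -vdotDl opprB addrA subrK.
under [X in _ <= _ * X]eq_bigr => k _ do rewrite shift /mix_dirac mulrDl mulrDl.
have uj : u j = 0 by rewrite /u subrr vdot0l.
have dirac_part : \sum_k (k == j)%:R / 2 * (u k - b) ^+ 2 = 2^-1 * b ^+ 2.
  rewrite (bigD1 j) //= big1 => [|k /negPf ->]; last by rewrite !mul0r.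
  by rewrite eqxx uj sub0r sqrrN mul1r addr0.
rewrite big_split /= dirac_part.
have sum_b : \sum_k p k * b ^+ 2 = b ^+ 2 by rewrite -mulr_suml p_sum1 mul1r.
have le_u : \sum_k p k * u k ^+ 2 <= 2 * \sum_k p k * (u k - b) ^+ 2 + 2 * b ^+ 2.
  rewrite -[in X in _ + 2 * X]sum_b !mulr_sumr -big_split /=.
  apply: ler_sum => k _.
  by have := mulr_ge0 (p_ge0 k) (sqr_ge0 (u k - 2 * b)); nra.
have -> : \sum_k p k / 2 * (u k - b) ^+ 2 = 2^-1 * \sum_k p k * (u k - b) ^+ 2.
  by rewrite mulr_sumr; apply: eq_bigr => k _; ring.
lra.
Qed.

End DesignMatrix.

Section Maxima.
Local Open Scope ereal_scope.
Variables (R : realType) (T : Type).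

Lemma bigmaxe_le_scale (s : seq T) (P : pred T) (F G : T -> \bar R) (c : R) :
  (0 <= c)%R -> (forall x, P x -> F x <= c%:E * G x) ->
  \big[maxe/0]_(x <- s | P x) F x <= c%:E * \big[maxe/0]_(x <- s | P x) G x.
Proof.
move=> c_ge0 leFG; have cE_ge0 : 0 <= c%:E by rewrite lee_fin.
elim/big_rec2: _ => [|x y1 y2 Px le_y]; first by rewrite mule0.
rewrite ge_max; apply/andP; split.
  by apply: le_trans (leFG x Px) _; rewrite lee_wpmul2l // le_max lexx.
by apply: le_trans le_y _; rewrite lee_wpmul2l // le_max lexx orbT.
Qed.

End Maxima.

Lemma tau_obj_rebase (R : realType) (d K : nat) (X : 'I_K -> 'cV[R]_d)
    (Z : seq 'cV[R]_d) (zs theta : 'cV[R]_d) (i j : 'I_K) (p : 'I_K -> R) :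
  simplex p ->
  (tau_obj X Z zs theta i (mix_dirac j p) <= 4%:E * tau_obj X Z zs theta j p)%E.
Proof.
move=> p_simplex; have [q_ge0 _] := mix_dirac_simplex j p_simplex.
have [p_ge0 _] := p_simplex.
apply: bigmaxe_le_scale => // z _ /=.
set c := (_ ^-1)%:E; have c_ge0 : (0 <= c)%E by rewrite lee_fin invr_ge0 sqr_ge0.
set ni := ginv_norm _ (zs - z); set nj := ginv_norm _ (zs - z).
have ni_ge0 : (0 <= ni)%E by apply: ginv_norm_ge0; [exact: Sigma_mj_sym|exact: Sigma_mj_psd].
have ni_le : (ni <= 2%:E * nj)%E.
  apply: ginv_norm_le_scale; rewrite ?Sigma_mj_sym //; try exact: Sigma_mj_psd.
  by move=> v; apply: Sigma_mj_rebase.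
have -> : (4%:E * (nj * nj * c) = (2%:E * nj) * (2%:E * nj) * c)%E.
  by rewrite [in RHS]muleACA -EFinM -natrM !muleA.
by rewrite lee_wpmul2r // lee_pmul.
Qed.

Unset Implicit Arguments.

Theorem mainTheorem2 (R : realType) (d K : nat) (X : 'I_K -> 'cV[R]_d)
  (Z : seq 'cV[R]_d) (theta zs : 'cV[R]_d)
  (zs_in : zs \in Z)
  (zs_unique : forall z, z \in Z -> z != zs ->
     ((z^T *m theta) 0 0) < ((zs^T *m theta) 0 0))
  (i j : 'I_K) :
  (tau_lin X Z zs theta i <= 4%:E * tau_lin X Z zs theta j)%E.
Proof.
have four_gt0 : (0 < 4 :> R) by [].
rewrite -lee_pdivrMl //.
apply: le_ereal_inf_tmp => _ [p p_simplex <-].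
rewrite lee_pdivrMl //; apply: le_trans (tau_obj_rebase X Z zs theta i j p_simplex).
by apply: ereal_inf_lbound; exists (mix_dirac j p) => //; exact: mix_dirac_simplex.
Qed.
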